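(* The sequence $(v_k)_{k\in\mathbb N}$ of represented tensors produced by the ALS method satisfies $\|v_{k+1}-v_k\|_A\to0$ as $k\to\infty$, where $\|v\|_A=\sqrt{\langle Av,v\rangle}$.
   Context: Let $\mathcal V=\bigotimes_{\nu=1}^d\mathbb R^{m_\nu}\cong\mathbb R^N$ with the Euclidean inner product $\langle\cdot,\cdot\rangle$. Let $A\in\mathbb R^{N\times N}$ be symmetric positive definite, $b\in\mathcal V\setminus\{0\}$, $f(v)=\frac{1}{\|b\|^2}(\frac12\langle Av,v\rangle-\langle b,v\rangle)$. Let $L\ge d$, $P_1,\dots,P_L$ finite-dimensional real inner product spaces, $P=P_1\times\dots\times P_L$, $U:P\to\mathcal V$ multilinear. For $\mathbf p\in P$, $W_{\mu,\mathbf p^{[\mu]}}:P_\mu\to\mathcal V$ is $q\mapsto U(p_1,\dots,p_{\mu-1},q,p_{\mu+1},\dots,p_L)$; $X^T$ transpose, $X^+$ pseudoinverse. ALS: choose $\mathbf p_1=(p_1^1,\dots,p_L^1)\in P$; for $k=1,2,\dots$ and $\mu=1,\dots,L$ in order, $W_{k,\mu}:=W_{\mu,(p_1^{k+1},\dots,p_{\mu-1}^{k+1},p_{\mu+1}^k,\dots,p_L^k)}$ and $p_\mu^{k+1}:=(W_{k,\mu}^TAW_{k,\mu})^+W_{k,\mu}^Tb$ (the minimum-norm minimiser of $q\mapsto f(U(p_1^{k+1},\dots,p_{\mu-1}^{k+1},q,p_{\mu+1}^k,\dots,p_L^k))$). Put $v_k=U(p_1^k,\dots,p_L^k)$. *)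

From HB Require Import structures.
From mathcomp Require Import all_boot all_order all_algebra.
From mathcomp Require Import all_classical all_reals all_analysis.
Set Implicit Arguments. Unset Strict Implicit. Unset Printing Implicit Defensive.
Import Order.TTheory GRing.Theory Num.Theory.
Local Open Scope ring_scope.

Definition param (R : realType) (L : nat) (n : 'I_L -> nat) :=
  forall mu : 'I_L, 'cV[R]_(n mu).

Definition subst_param (R : realType) (L : nat) (n : 'I_L -> nat)
  (p : param R n) (mu : 'I_L) (q : 'cV[R]_(n mu)) : param R n :=
  @dfwith _ (fun i => 'cV[R]_(n i)) p mu q.

Definition multilinear (R : realType) (L N : nat) (n : 'I_L -> nat)
  (U : param R n -> 'cV[R]_N) : Prop :=
  forall (p : param R n) (mu : 'I_L) (a : R) (q1 q2 : 'cV[R]_(n mu)),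
    U (subst_param p (a *: q1 + q2)) =
    a *: U (subst_param p q1) + U (subst_param p q2).

(* Matrix of the linear map W_{mu,p^[mu]} : P_mu -> V, q |-> U(.., q, ..)
   (its j-th column is the image of the j-th standard basis vector). *)
Definition Wmat (R : realType) (L N : nat) (n : 'I_L -> nat)
  (U : param R n -> 'cV[R]_N) (p : param R n) (mu : 'I_L) : 'M[R]_(N, n mu) :=
  \matrix_(r < N, j < n mu) U (subst_param p (delta_mx j 0)) r 0.

Definition spd (R : realType) (N : nat) (A : 'M[R]_N) : Prop :=
  A^T = A /\ forall x : 'cV[R]_N, x != 0 -> 0 < (x^T *m A *m x) 0 0.

(* X is the Moore--Penrose pseudoinverse of M (Penrose equations; it exists
   and is unique). *)
Definition is_pinv (R : realType) (m k : nat) (M : 'M[R]_(m, k)) (X : 'M[R]_(k, m))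
  : Prop :=
  [/\ M *m X *m M = M, X *m M *m X = X, (M *m X)^T = M *m X & (X *m M)^T = X *m M].

Definition normA (R : realType) (N : nat) (A : 'M[R]_N) (v : 'cV[R]_N) : R :=
  Num.sqrt ((v^T *m A *m v) 0 0).

(* Parameter used inside sweep k at core mu:
   (p_1^{k+1},..,p_{mu-1}^{k+1}, p_mu^k, p_{mu+1}^k,..,p_L^k);
   component mu is irrelevant for W. *)
Definition sweep_param (R : realType) (L : nat) (n : 'I_L -> nat)
  (p : nat -> param R n) (k : nat) (mu : 'I_L) : param R n :=
  fun i => if (i < mu)%N then p k.+1 i else p k i.

Definition als_seq (R : realType) (L N : nat) (n : 'I_L -> nat)
  (U : param R n -> 'cV[R]_N) (A : 'M[R]_N) (b : 'cV[R]_N)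
  (p : nat -> param R n) : Prop :=
  forall (k : nat) (mu : 'I_L),
    let W := Wmat U (sweep_param p k mu) mu in
    exists X : 'M[R]_(n mu), is_pinv (W^T *m A *m W) X /\
      p k.+1 mu = X *m (W^T *m b).

(** Each ALS micro-step minimises the energy [f(v) = <Av,v>/2 - <b,v>] exactly
    over the range of the linear map [W_{k,mu}], so by Galerkin orthogonality it
    lowers the energy by exactly half the squared [A]-norm of the step.  A sweep
    consists of [L] micro-steps, hence [||v_{k+1} - v_k||_A^2] is bounded by a
    constant times the energy decrease [f(v_k) - f(v_{k+1})].  Since [A] is
    positive definite the energy is bounded below, so the nonincreasing sequence
    [f(v_k)] converges and its decrements tend to zero. *)

From HB Require Import structures.
From mathcomp Require Import all_boot all_order all_algebra.
From mathcomp Require Import all_classical all_reals all_analysis.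
From mathcomp Require Import lra.
Import Order.TTheory GRing.Theory Num.Theory.
Set Implicit Arguments. Unset Strict Implicit. Unset Printing Implicit Defensive.
Local Open Scope classical_set_scope.
Local Open Scope ring_scope.

Section Forms.
Variables (R : realType) (N : nat) (A : 'M[R]_N).

Definition bform (x y : 'cV[R]_N) : R := (x^T *m A *m y) 0 0.
Definition qform (x : 'cV[R]_N) : R := bform x x.

Lemma bformDl x y z : bform (x + y) z = bform x z + bform y z.
Proof. by rewrite /bform linearD /= !mulmxDl mxE. Qed.

Lemma bformDr x y z : bform z (x + y) = bform z x + bform z y.
Proof. by rewrite /bform mulmxDr mxE. Qed.

Lemma bformNl x z : bform (- x) z = - bform x z.
Proof. by rewrite /bform linearN /= !mulNmx mxE. Qed.

Lemma bformNr x z : bform z (- x) = - bform z x.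
Proof. by rewrite /bform mulmxN mxE. Qed.

Lemma scalar_mx_trC (x y : 'cV[R]_N) : (x^T *m y) 0 0 = (y^T *m x) 0 0.
Proof. by rewrite -[in LHS](trmxK (x^T *m y)) [in LHS]mxE trmx_mul trmxK. Qed.

Lemma bformC x y : A^T = A -> bform x y = bform y x.
Proof.
move=> AT; rewrite /bform -[in LHS](trmxK (x^T *m A *m y)) [in LHS]mxE.
by rewrite !trmx_mul trmxK AT mulmxA.
Qed.

Lemma qformN x : qform (- x) = qform x.
Proof. by rewrite /qform bformNl bformNr opprK. Qed.

Lemma qform_parallelogram x y :
  qform (x + y) + qform (x - y) = 2 * qform x + 2 * qform y.
Proof. rewrite /qform !(bformDl, bformDr, bformNl, bformNr) opprK; lra. Qed.

Hypothesis HA : spd A.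

Lemma qform_ge0 x : 0 <= qform x.
Proof.
have [->|nz] := eqVneq x 0; last exact: ltW (HA.2 _ nz).
by rewrite /qform /bform mulmx0 mxE.
Qed.

Lemma qform_eq0 x : qform x = 0 -> x = 0.
Proof.
move=> x0; apply/eqP; apply: contraTT isT => nz.
by have := HA.2 _ nz; rewrite -/(bform x x) -/(qform x) x0 ltxx.
Qed.

Lemma qformD_le x y : qform (x + y) <= 2 * qform x + 2 * qform y.
Proof. by rewrite -qform_parallelogram lerDl qform_ge0. Qed.

End Forms.

Section Multilinear.
Variables (R : realType) (L N : nat) (n : 'I_L -> nat) (U : param R n -> 'cV[R]_N).
Hypothesis HU : multilinear U.

Lemma multilinear_subst0 p mu : U (subst_param p (0 : 'cV[R]_(n mu))) = 0.
Proof.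
have := HU p (-1) (0 : 'cV[R]_(n mu)) 0.
by rewrite scaler0 addr0 scaleN1r => {1}->; rewrite addNr.
Qed.

Lemma multilinear_Wmat p mu q : U (subst_param p q) = Wmat U p mu *m q.
Proof.
have -> : Wmat U p mu *m q =
    \sum_(j < n mu) q j 0 *: U (subst_param p (delta_mx j 0)).
  apply/matrixP => r c; rewrite (ord1 c) mxE summxE; apply: eq_bigr => j _.
  by rewrite !mxE mulrC.
rewrite {1}(matrix_sum_delta q) (eq_bigr _ (fun j _ => big_ord1 _ _)) /=.
elim/big_rec2: _ => [|j y1 y2 _ IH]; first exact: multilinear_subst0.
by rewrite HU IH.
Qed.

End Multilinear.

Section NormalEquation.
Variables (R : realType) (N k : nat) (A : 'M[R]_N) (W : 'M[R]_(N, k)).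
Hypothesis HA : spd A.

Lemma cV_normsq_eq0 (z : 'cV[R]_k) : (z^T *m z) 0 0 = 0 -> z = 0.
Proof.
rewrite mxE => zz0; apply/matrixP => i j; rewrite (ord1 j) [RHS]mxE.
have sq_ge0 l : xpredT l -> 0 <= z^T 0 l * z l 0.
  by move=> _; rewrite mxE -expr2 sqr_ge0.
have /eqP := @psumr_eq0P _ _ xpredT (fun l => z^T 0 l * z l 0) sq_ge0 zz0 i isT.
by rewrite mxE mulf_eq0 orbb => /eqP.
Qed.

Lemma gram_ker (z : 'cV[R]_k) : W^T *m A *m W *m z = 0 -> W *m z = 0.
Proof.
move=> Mz0; apply: (qform_eq0 HA).
rewrite /qform /bform.
have -> : (W *m z)^T *m A *m (W *m z) = z^T *m (W^T *m A *m W *m z).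
  by rewrite trmx_mul !mulmxA.
by rewrite Mz0 mulmx0 mxE.
Qed.

(** [W^T b] lies in the range of [M = W^T A W] (see [gram_ker]), on which [M X]
    is the identity; so [X W^T b] solves the normal equations [M q = W^T b]. *)
Lemma pinv_normal_eq (b : 'cV[R]_N) X :
  is_pinv (W^T *m A *m W) X ->
  W^T *m (A *m (W *m (X *m (W^T *m b))) - b) = 0.
Proof.
move=> [MXM _ MX_sym _].
set M := W^T *m A *m W; set y := W^T *m b.
have MT : M^T = M by rewrite /M !trmx_mul trmxK HA.1 mulmxA.
have MMX : M *m (M *m X) = M.
  have <- : (M *m X *m M)^T = M *m (M *m X) by rewrite trmx_mul MX_sym MT.
  by rewrite MXM MT.
set z := y - M *m X *m y.
have Wz0 : W *m z = 0.
  by apply: gram_ker; rewrite -/M /z mulmxBr (mulmxA M (M *m X)) MMX subrr.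
have zT : z^T = y^T - y^T *m (X^T *m M).
  by rewrite /z linearB /= (trmx_mul (M *m X) y) (trmx_mul M X) MT.
have yz0 : y^T *m z = 0 by rewrite /y trmx_mul trmxK -mulmxA Wz0 mulmx0.
have z0 : z = 0.
  apply: cV_normsq_eq0.
  by rewrite zT mulmxBl yz0 -!mulmxA Wz0 !mulmx0 subr0 mxE.
by rewrite mulmxBr !mulmxA -/M -/y -[RHS]oppr0 -z0 /z opprB mulmxA.
Qed.

End NormalEquation.

Section Energy.
Variables (R : realType) (N : nat) (A : 'M[R]_N) (b : 'cV[R]_N).
Hypothesis HA : spd A.

(** The paper's [f] times [||b||^2]; the positive factor is irrelevant here. *)
Definition energy (v : 'cV[R]_N) : R := qform A v / 2 - (b^T *m v) 0 0.

Lemma energy_galerkin_drop k (W : 'M[R]_(N, k)) q q' :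
  W^T *m (A *m (W *m q') - b) = 0 ->
  energy (W *m q) - energy (W *m q') = qform A (W *m q - W *m q') / 2.
Proof.
move=> orth; set w := W *m q'; set d := W *m q - w.
have dw : bform A d w = (d^T *m b) 0 0.
  have /eqP : d^T *m (A *m w - b) = 0.
    by rewrite /d -mulmxBr trmx_mul -mulmxA orth mulmx0.
  by rewrite mulmxBr subr_eq0 => /eqP dAw; rewrite /bform -mulmxA dAw.
have -> : W *m q = d + w by rewrite /d subrK.
clearbody d w.
rewrite /energy /qform !(bformDl, bformDr) (bformC w d HA.1) dw mulmxDr.
rewrite [(b^T *m d + _) 0 0]mxE (scalar_mx_trC b d); lra.
Qed.

Lemma energy_bounded_below : exists c, forall v, c <= energy v.
Proof.
have Aunit : A \in unitmx.
  rewrite -row_free_unit; apply: inj_row_free => v vA0.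
  apply: trmx_inj; rewrite trmx0; apply: (qform_eq0 HA).
  by rewrite /qform /bform trmxK vA0 mul0mx mxE.
set x := invmx A *m b.
have Ax : A *m x = b by rewrite /x mulmxA mulmxV // mul1mx.
exists (- qform A x / 2) => v.
have vx : bform A v x = (b^T *m v) 0 0 by rewrite /bform -mulmxA Ax scalar_mx_trC.
have -> : energy v = qform A (v - x) / 2 - qform A x / 2.
  rewrite /energy /qform !(bformDl, bformDr, bformNl, bformNr).
  rewrite (bformC x v HA.1) vx; lra.
have := qform_ge0 HA (v - x); lra.
Qed.

Lemma qform_chain_le (x : nat -> 'cV[R]_N) J :
  (forall j, (j < J)%N ->
     energy (x j) - energy (x j.+1) = qform A (x j - x j.+1) / 2) ->
  qform A (x J - x 0%N) <= 2 ^+ J * 2 * (energy (x 0%N) - energy (x J)).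
Proof.
elim: J => [_|J IH step]; first by rewrite !subrr /qform /bform mulmx0 mxE mulr0.
have bound := IH (fun j lt_jJ => step j (ltnW lt_jJ)).
have drop := step J (ltnSn J).
set d := x J - x J.+1 in drop *.
have d_ge0 := qform_ge0 HA d.
have tri := qformD_le HA (x J - x 0%N) (- d).
have -> : x J.+1 - x 0%N = (x J - x 0%N) + - d.
  by rewrite opprB [RHS]addrC addrA subrK.
move: tri bound; rewrite qformN exprS; set P := 2 ^+ J : R => tri bound.
have P_ge1 : 1 <= P by apply: exprn_ege1; lra.
have : 0 <= (P - 1) * qform A d by apply: mulr_ge0; lra.
nra.
Qed.

End Energy.

Import numFieldNormedType.Exports.

Lemma cvg_bounded_by_decrements (R : realType) (u a : R^nat) (C : R) :
  (exists c, forall k, c <= u k) -> 0 < C ->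
  (forall k, 0 <= a k <= C * (u k - u k.+1)) -> a @ \oo --> 0.
Proof.
move=> [c u_ge_c] C_gt0 a_bound.
have u_noninc : nonincreasing_seq u.
  apply/nonincreasing_seqP => k; rewrite -subr_ge0 -(pmulr_rge0 _ C_gt0).
  by have /andP[a_ge0 a_le] := a_bound k; exact: le_trans a_ge0 a_le.
have cvg_u : cvgn u.
  by apply: nonincreasing_is_cvgn => //; exists c => _ [k _ <-].
have decr0 : (fun k => u k - u k.+1) @ \oo --> 0.
  rewrite -(subrr (limn u)); apply: cvgB => //.
  by rewrite (cvg_shiftS u).
apply: (@squeeze_cvgr _ _ _ _ (fun=> 0) (fun k => C * (u k - u k.+1))).
- by apply: nearW => k; apply: a_bound.
- exact: cvg_cst.
- by rewrite -(mulr0 C); apply: cvgMl_tmp.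
Qed.

Section ALS.
Variables (R : realType) (L N : nat) (n : 'I_L -> nat).
Variables (U : param R n -> 'cV[R]_N) (A : 'M[R]_N) (b : 'cV[R]_N).
Variable p : nat -> param R n.
Hypotheses (HA : spd A) (HU : multilinear U) (Hals : als_seq U A b p).

(** The parameter after the first [j] micro-steps of sweep [k]; for [mu : 'I_L]
    it is convertible to [sweep_param p k mu]. *)
Definition partial_sweep (k j : nat) : param R n :=
  fun i => if (i < j)%N then p k.+1 i else p k i.

Lemma partial_sweep0 k : partial_sweep k 0 = p k.
Proof. exact: functional_extensionality_dep. Qed.

Lemma partial_sweepL k : partial_sweep k L = p k.+1.
Proof. by apply: functional_extensionality_dep => i; rewrite /partial_sweep ltn_ord. Qed.

Lemma subst_partial_sweep_old k (mu : 'I_L) :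
  subst_param (partial_sweep k mu) (p k mu) = partial_sweep k mu.
Proof.
apply: functional_extensionality_dep => i; rewrite /subst_param.
have [<-|ne] := eqVneq mu i; last by rewrite dfwithout.
by rewrite dfwithin /partial_sweep ltnn.
Qed.

Lemma subst_partial_sweep_new k (mu : 'I_L) :
  subst_param (partial_sweep k mu) (p k.+1 mu) = partial_sweep k mu.+1.
Proof.
apply: functional_extensionality_dep => i; rewrite /subst_param.
have [<-|ne] := eqVneq mu i; first by rewrite dfwithin /partial_sweep ltnSn.
rewrite dfwithout // /partial_sweep ltnS [in RHS]leq_eqVlt.
by rewrite (inj_eq val_inj) eq_sym (negbTE ne).
Qed.

Lemma als_microstep_drop k (mu : 'I_L) :
  let v j := U (partial_sweep k j) in
  energy A b (v mu) - energy A b (v mu.+1) = qform A (v mu - v mu.+1) / 2.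
Proof.
move=> v; have [X [HX p_next]] := Hals k mu.
set W := Wmat U (partial_sweep k mu) mu.
have -> : v mu = W *m p k mu.
  by rewrite -(multilinear_Wmat HU) subst_partial_sweep_old.
have -> : v mu.+1 = W *m p k.+1 mu.
  by rewrite -(multilinear_Wmat HU) subst_partial_sweep_new.
apply: (energy_galerkin_drop HA).
by rewrite p_next; apply: (pinv_normal_eq HA); exact: HX.
Qed.

Lemma als_sweep_bound k :
  qform A (U (p k.+1) - U (p k)) <=
    2 ^+ L * 2 * (energy A b (U (p k)) - energy A b (U (p k.+1))).
Proof.
rewrite -partial_sweepL -[p k]partial_sweep0.
apply: (qform_chain_le (x := fun j => U (partial_sweep k j)) HA) => j lt_jL.
exact: als_microstep_drop k (Ordinal lt_jL).
Qed.

End ALS.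

Theorem mainTheorem12 (R : realType) (d : nat) (m : 'I_d -> nat) (N : nat)
  (HN : N = (\prod_(nu < d) m nu)%N)
  (L : nat) (HL : (d <= L)%N) (n : 'I_L -> nat)
  (A : 'M[R]_N) (HA : spd A) (b : 'cV[R]_N) (Hb : b != 0)
  (U : param R n -> 'cV[R]_N) (HU : multilinear U)
  (p : nat -> param R n) (Hals : als_seq U A b p) :
  (fun k => normA A (U (p k.+1) - U (p k))) @ \oo --> 0.
Proof.
have [c c_le] := energy_bounded_below b HA.
have step_sq0 : (fun k => qform A (U (p k.+1) - U (p k))) @ \oo --> 0.
  apply: (@cvg_bounded_by_decrements _ (fun k => energy A b (U (p k))) _ (2 ^+ L * 2)).
  - by exists c.
  - by rewrite mulr_gt0 ?exprn_gt0.
  - by move=> k; rewrite qform_ge0 //= (als_sweep_bound HA HU Hals).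
rewrite -sqrtr0.
apply: (@cvg_comp _ _ _ (fun k => qform A (U (p k.+1) - U (p k))) Num.sqrt _ _ _ step_sq0).
exact: sqrt_continuous.
Qed.
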